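(* Assume the setting and hypotheses (A1)–(A4) of the context, with $\gamma,\lambda>0$, $\beta\in(0,1)$, $c_1\in(0,1/2)$, and let $\{z^k=(u^k,v^k,C^k)\}$ be generated by the inexact block coordinate descent scheme described in the context. Then there exists a constant $w_1>0$ such that for all $k$, $$E_\lambda(z^k)-E_\lambda(z^{k+1})\ge w_1\|z^{k+1}-z^k\|^2.$$
   Context: Let $n\ge1$, $\hat X\in\mathbb{R}^{n\times n}$ an observed transport plan (nonnegative, with row sums $\mu$ and column sums $\nu$, $\mu,\nu$ probability vectors), $\psi:\mathbb{R}\to(-\infty,+\infty]$ convex with $\psi(Z):=\sum_{i,j}\psi(Z_{ij})$ for matrices, $(u\oplus v)_{ij}:=u_i+v_j$, $E(u,v,C):=\psi\big((u\oplus v-C)/\gamma\big)-\big\langle(u\oplus v-C)/\gamma,\hat X\big\rangle$ and $E_\lambda(u,v,C):=E(u,v,C)+\lambda(R_1(u)+R_2(v)+R_3(C))$. Hypotheses: (A1) $\psi$ is of Legendre type and $C^2$ on $\operatorname{int}(\operatorname{dom}\psi)$; (A2) for every generated iterate, $\hat X_{ij}$ and $(u^k_i+v^k_j-C^k_{ij})/\gamma$ lie in $\operatorname{int}(\operatorname{dom}\psi)$ for all $i,j$; (A3) $R_1,R_2:\mathbb{R}^n\to\mathbb{R}$, $R_3:\mathbb{R}^{n\times n}\to\mathbb{R}$ are continuously differentiable and strongly convex with moduli $\sigma_1,\sigma_2,\sigma_3>0$; (A4) $\mathcal{C}\subseteq\mathbb{R}^{n\times n}$ is nonempty, closed, convex,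 with Euclidean projection $P_{\mathcal{C}}$. The scheme, from $z^0\in\mathbb{R}^n\times\mathbb{R}^n\times\mathcal{C}$: at iteration $k$, (u-block) with $g_u=\nabla_uE_\lambda(u^k,v^k,C^k)$, $H_u=\nabla^2_{uu}E_\lambda(u^k,v^k,C^k)$, $d_u=-H_u^{-1}g_u$, let $\alpha^u_k$ be the first $\alpha\in\{1,\beta,\beta^2,\dots\}$ with $E_\lambda(u^k+\alpha d_u,v^k,C^k)\le E_\lambda(u^k,v^k,C^k)+c_1\alpha g_u^\top d_u$, and set $u^{k+1}=u^k+\alpha_k^ud_u$; (v-block) the same with $v$ in place of $u$ at the point $(u^{k+1},v^k,C^k)$, giving $v^{k+1}=v^k+\alpha_k^vd_v$; (C-block) with $g_C=\nabla_CE_\lambda(u^{k+1},v^{k+1},C^k)$ and $C(\alpha):=P_{\mathcal{C}}(C^k-\alpha g_C)$, let $\alpha^C_k$ be the first $\alpha\in\{1,\beta,\beta^2,\dots\}$ with $E_\lambda(u^{k+1},v^{k+1},C(\alpha))\le E_\lambda(u^{k+1},v^{k+1},C^k)+c_1\langle g_C,C(\alpha)-C^k\rangle$, and set $C^{k+1}=C(\alpha^C_k)$. *)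

From HB Require Import structures.
From mathcomp Require Import all_boot all_order all_algebra.
From mathcomp Require Import reals constructive_ereal.
Set Implicit Arguments.
Unset Strict Implicit.
Unset Printing Implicit Defensive.
Import Order.TTheory GRing.Theory Num.Theory.
Local Open Scope ring_scope.

Section Defs.
Variable R : realType.

Definition frob {p q : nat} (A B : 'M[R]_(p, q)) : R :=
  \sum_(i < p) \sum_(j < q) A i j * B i j.
Definition sqnorm {p q : nat} (A : 'M[R]_(p, q)) : R := frob A A.
Definition fnorm {p q : nat} (A : 'M[R]_(p, q)) : R := Num.sqrt (sqnorm A).

Definition oplus {n : nat} (u v : 'cV[R]_n) : 'M[R]_n :=
  \matrix_(i, j) (u i 0 + v j 0).

Definition never_minfty (f : R -> \bar R) := forall x, f x != -oo%E.
Definition in_dom (f : R -> \bar R) (x : R) := (f x < +oo)%E.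
Definition in_int_dom (f : R -> \bar R) (x : R) :=
  exists2 r : R, 0 < r & forall y, `|y - x| < r -> in_dom f y.
Definition proper_fun (f : R -> \bar R) := never_minfty f /\ exists x, in_dom f x.
(* closed = lower semicontinuous *)
Definition lsc (f : R -> \bar R) :=
  forall x (a : R), (a%:E < f x)%E ->
    exists2 d : R, 0 < d & forall y, `|y - x| < d -> (a%:E < f y)%E.
Definition convex_fun (f : R -> \bar R) :=
  forall x y t : R, 0 < t < 1 ->
    (f (t * x + (1 - t) * y)%R <= t%:E * f x + (1 - t)%R%:E * f y)%E.
Definition deriv_atE (f : R -> \bar R) (x d : R) :=
  forall eps : R, 0 < eps -> exists2 delta : R, 0 < delta &
    forall y, `|y - x| < delta ->
      f y \is a fin_num /\
      `|fine (f y) - fine (f x) - d * (y - x)| <= eps * `|y - x|.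
Definition deriv_at (f : R -> R) (x d : R) :=
  forall eps : R, 0 < eps -> exists2 delta : R, 0 < delta &
    forall y, `|y - x| < delta -> `|f y - f x - d * (y - x)| <= eps * `|y - x|.
Definition cont_at (f : R -> R) (x : R) :=
  forall eps : R, 0 < eps -> exists2 delta : R, 0 < delta &
    forall y, `|y - x| < delta -> `|f y - f x| < eps.
Definition ess_smooth (f : R -> \bar R) :=
  (exists x, in_int_dom f x) /\
  (forall x, in_int_dom f x -> exists d, deriv_atE f x d) /\
  (forall (s ds : nat -> R) (b : R),
     (forall k, in_int_dom f (s k)) -> (forall k, deriv_atE f (s k) (ds k)) ->
     (forall e : R, 0 < e -> exists N, forall k, (N <= k)%N -> `|s k - b| < e) ->
     ~ in_int_dom f b ->
     forall M : R, exists N, forall k, (N <= k)%N -> M <= `|ds k|).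
Definition subgrad (f : R -> \bar R) (x s : R) :=
  f x \is a fin_num /\ forall y, (f x + (s * (y - x))%:E <= f y)%E.
Definition dom_subdiff (f : R -> \bar R) (x : R) := exists s, subgrad f x s.
Definition convex_set1 (S : R -> Prop) :=
  forall x y t : R, S x -> S y -> 0 <= t <= 1 -> S (t * x + (1 - t) * y).
Definition ess_strictly_convex (f : R -> \bar R) :=
  forall S : R -> Prop, (forall x, S x -> dom_subdiff f x) -> convex_set1 S ->
    forall x y t : R, S x -> S y -> x != y -> 0 < t < 1 ->
      (f (t * x + (1 - t) * y)%R < t%:E * f x + (1 - t)%R%:E * f y)%E.
Definition legendre (f : R -> \bar R) :=
  [/\ proper_fun f, lsc f, convex_fun f, ess_smooth f & ess_strictly_convex f].
Definition C2_on_int_dom (f : R -> \bar R) :=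
  exists df d2f : R -> R, forall x, in_int_dom f x ->
    [/\ deriv_atE f x (df x), deriv_at df x (d2f x) & cont_at d2f x].

Definition grad_at {p q : nat} (f : 'M[R]_(p, q) -> R) (x g : 'M[R]_(p, q)) :=
  forall eps : R, 0 < eps -> exists2 delta : R, 0 < delta &
    forall h, fnorm h < delta -> `|f (x + h) - f x - frob g h| <= eps * fnorm h.
Definition grad_atE {p q : nat} (f : 'M[R]_(p, q) -> \bar R) (x g : 'M[R]_(p, q)) :=
  f x \is a fin_num /\
  forall eps : R, 0 < eps -> exists2 delta : R, 0 < delta &
    forall h, fnorm h < delta ->
      f (x + h) \is a fin_num /\
      `|fine (f (x + h)) - fine (f x) - frob g h| <= eps * fnorm h.
Definition hess_atE {n : nat} (f : 'cV[R]_n -> \bar R) (x : 'cV[R]_n) (H : 'M[R]_n) :=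
  exists G : 'cV[R]_n -> 'cV[R]_n, exists2 r : R, 0 < r &
    (forall y, fnorm (y - x) < r -> grad_atE f y (G y)) /\
    (forall eps : R, 0 < eps -> exists2 delta : R, 0 < delta &
       forall h, fnorm h < delta ->
         fnorm (G (x + h) - G x - H *m h) <= eps * fnorm h).
Definition continuously_differentiable {p q : nat} (f : 'M[R]_(p, q) -> R) :=
  exists G : 'M[R]_(p, q) -> 'M[R]_(p, q),
    (forall x, grad_at f x (G x)) /\
    (forall x (eps : R), 0 < eps -> exists2 delta : R, 0 < delta &
       forall y, fnorm (y - x) < delta -> fnorm (G y - G x) < eps).
Definition strongly_convex {p q : nat} (f : 'M[R]_(p, q) -> R) (sigma : R) :=
  forall x y (t : R), 0 <= t <= 1 ->
    f (t *: x + (1 - t) *: y) <=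
      t * f x + (1 - t) * f y - sigma / 2 * t * (1 - t) * sqnorm (x - y).

Definition closed_mset {n : nat} (S : 'M[R]_n -> Prop) :=
  forall X, (forall e : R, 0 < e -> exists2 Y, S Y & fnorm (X - Y) < e) -> S X.
Definition convex_mset {n : nat} (S : 'M[R]_n -> Prop) :=
  forall X Y (t : R), S X -> S Y -> 0 <= t <= 1 -> S (t *: X + (1 - t) *: Y).
Definition is_proj {n : nat} (S : 'M[R]_n -> Prop) (P : 'M[R]_n -> 'M[R]_n) :=
  forall X, S (P X) /\ forall Y, S Y -> fnorm (X - P X) <= fnorm (X - Y).

Definition Psi {n : nat} (psi : R -> \bar R) (Z : 'M[R]_n) : \bar R :=
  (\sum_(i < n) \sum_(j < n) psi (Z i j))%E.
Definition Eobj {n : nat} (psi : R -> \bar R) (gamma : R) (Xhat : 'M[R]_n)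
  (u v : 'cV[R]_n) (C : 'M[R]_n) : \bar R :=
  let Z := gamma^-1 *: (oplus u v - C) in
  (Psi psi Z - (frob Z Xhat)%:E)%E.
Definition Elam {n : nat} (psi : R -> \bar R) (gamma lambda : R) (Xhat : 'M[R]_n)
  (R1 R2 : 'cV[R]_n -> R) (R3 : 'M[R]_n -> R)
  (u v : 'cV[R]_n) (C : 'M[R]_n) : \bar R :=
  (Eobj psi gamma Xhat u v C + (lambda * (R1 u + R2 v + R3 C))%:E)%E.

Definition first_pow (P : R -> Prop) (beta : R) (m : nat) :=
  P (beta ^+ m) /\ forall m', (m' < m)%N -> ~ P (beta ^+ m').

End Defs.

From HB Require Import structures.
From mathcomp Require Import all_boot all_order all_algebra.
From mathcomp Require Import reals constructive_ereal.
From mathcomp Require Import ring lra.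
Set Implicit Arguments.
Unset Strict Implicit.
Unset Printing Implicit Defensive.
Import Order.TTheory GRing.Theory Num.Theory.
Local Open Scope ring_scope.

(* Each block objective of E_lambda is a convex function psi of an affine image
   of the block variable, plus a linear term, plus lambda times a sigma-strongly
   convex regulariser; hence it is (lambda sigma)-strongly convex on its finite
   part.  For such an f with gradient g at x, strong convexity gives
   f y - f x >= <g, y - x> + lambda sigma / 2 |y - x|^2, and together with the
   Armijo inequality f y <= f x + c1 <g, y - x> satisfied by every accepted step
   this yields f x - f y >= c1 lambda sigma / 2 |y - x|^2.  Summing the three block decreases gives the claim
   with w1 = c1 lambda min(sigma_i) / 2. *)

Section Frobenius.
Variables (R : realType) (p q : nat).
Implicit Types (a : R) (A B X : 'M[R]_(p, q)).

Lemma frobDl A B X : frob (A + B) X = frob A X + frob B X.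
Proof.
rewrite /frob -big_split; apply: eq_bigr => i _.
by rewrite -big_split; apply: eq_bigr => j _; rewrite mxE mulrDl.
Qed.

Lemma frobZl a A X : frob (a *: A) X = a * frob A X.
Proof.
rewrite /frob mulr_sumr; apply: eq_bigr => i _.
by rewrite mulr_sumr; apply: eq_bigr => j _; rewrite mxE mulrA.
Qed.

Lemma frobZr a X A : frob X (a *: A) = a * frob X A.
Proof.
rewrite /frob mulr_sumr; apply: eq_bigr => i _.
by rewrite mulr_sumr; apply: eq_bigr => j _; rewrite mxE mulrCA.
Qed.

Lemma sqnorm_ge0 A : 0 <= sqnorm A.
Proof. by apply: sumr_ge0 => i _; apply: sumr_ge0 => j _; exact: sqr_ge0. Qed.

Lemma sqnormZ a A : sqnorm (a *: A) = a ^+ 2 * sqnorm A.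
Proof. by rewrite /sqnorm frobZl frobZr mulrA -expr2. Qed.

Lemma fnormZ a A : 0 <= a -> fnorm (a *: A) = a * fnorm A.
Proof. by move=> a0; rewrite /fnorm sqnormZ sqrtrM ?sqr_ge0 // sqrtr_sqr ger0_norm. Qed.

End Frobenius.

Section ExtendedSums.
Variable R : realType.
Local Open Scope ereal_scope.

Lemma sume_neqNy (I : eqType) (s : seq I) (f : I -> \bar R) :
  (forall i, f i != -oo) -> \sum_(i <- s) f i != -oo.
Proof. by move=> fNy; apply/eqP => /esum_eqNyP [i [_ _ /eqP]]; apply/negP. Qed.

Lemma lee_sum_comb (I : Type) (s : seq I) (a b : R) (f g h : I -> \bar R) :
  (forall i, f i != -oo) -> (forall i, g i != -oo) ->
  (forall i, h i <= a%:E * f i + b%:E * g i) ->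
  \sum_(i <- s) h i <= a%:E * \sum_(i <- s) f i + b%:E * \sum_(i <- s) g i.
Proof.
have adde_def_neqNy (e : I -> \bar R) : (forall i, e i != -oo) ->
    {in xpredT &, forall i j, e i +? e j}.
  by move=> eNy i j _ _; move: (eNy i) (eNy j); case: (e i); case: (e j).
move=> fNy gNy hle; apply: le_trans (@lee_sum _ _ h _ s xpredT (fun i _ => hle i)) _.
by rewrite big_split !fin_num_sume_distrr //; exact: adde_def_neqNy.
Qed.

Lemma Psi_neqNy (n : nat) (psi : R -> \bar R) (Z : 'M[R]_n) :
  never_minfty psi -> Psi psi Z != -oo.
Proof. by move=> psiNy; do 2!apply: sume_neqNy => ?. Qed.

Lemma Psi_convex (n : nat) (psi : R -> \bar R) (Z1 Z2 : 'M[R]_n) (t : R) :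
  convex_fun psi -> never_minfty psi -> (0 < t < 1)%R ->
  Psi psi (t *: Z1 + (1 - t) *: Z2)%R <= t%:E * Psi psi Z1 + (1 - t)%:E * Psi psi Z2.
Proof.
move=> psi_cvx psiNy t01; apply: lee_sum_comb => [i|i|i]; try exact: sume_neqNy.
by apply: lee_sum_comb => // j; rewrite !mxE; exact: psi_cvx.
Qed.

End ExtendedSums.

Section StrongConvexity.
Variables (R : realType) (p q : nat).
Notation M := 'M[R]_(p, q).

Definition strongly_convexE (f : M -> \bar R) (m : R) :=
  forall x y t, 0 < t < 1 -> f x \is a fin_num -> f y \is a fin_num ->
    f (t *: x + (1 - t) *: y) \is a fin_num /\
    fine (f (t *: x + (1 - t) *: y)) <=
      t * fine (f x) + (1 - t) * fine (f y) - m / 2 * t * (1 - t) * sqnorm (x - y).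

Lemma strongly_convexZ (K : M -> R) (s lam : R) :
  0 <= lam -> strongly_convex K s -> strongly_convex (fun x => lam * K x) (lam * s).
Proof.
by move=> lam0 Ks x y t t01; have := ler_wpM2l lam0 (Ks x y t t01); lra.
Qed.

Lemma strongly_convexD_affine (K a : M -> R) (s : R) :
  strongly_convex K s ->
  (forall x y t, a (t *: x + (1 - t) *: y) = t * a x + (1 - t) * a y) ->
  strongly_convex (fun x => K x + a x) s.
Proof. by move=> Ks a_aff x y t t01; rewrite a_aff; have := Ks x y t t01; lra. Qed.

Lemma strongly_convexE_convexD (f P : M -> \bar R) (r : M -> R) (m : R) :
  (forall x, P x != -oo%E) ->
  (forall x y : M, forall t : R, 0 < t < 1 ->
     (P (t *: x + (1 - t) *: y)%R <= t%:E * P x + (1 - t)%:E * P y)%E) ->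
  strongly_convex r m -> (forall x, f x = (P x + (r x)%:E)%E) ->
  strongly_convexE f m.
Proof.
move=> PNy P_cvx r_sc fE x y t t01; rewrite !fE !fin_numD /= !andbT.
move=> /fineK Px /fineK Py.
have := P_cvx x y t t01; rewrite -Px -Py -!EFinM -EFinD => Pt_le.
have Pt : P (t *: x + (1 - t) *: y) \is a fin_num.
  rewrite fin_numE PNy /=; apply/eqP => Pty.
  by move: Pt_le; rewrite Pty leNgt ltry.
split=> //; move: Pt_le; rewrite -(fineK Pt) -Px -Py -!EFinD lee_fin /=.
have t01w : 0 <= t <= 1 by lra.
by have := r_sc x y t t01w; lra.
Qed.

Lemma exists_small_pos (d A e : R) :
  0 < d -> 0 <= A -> 0 < e -> exists t, [/\ 0 < t, t < d, t < 1 & t * A <= e].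
Proof.
move=> d0 A0 e0; have A1 : 0 < A + 1 by rewrite ltr_wpDl.
exists (Num.min (1 / 2) (Num.min (d / 2) (e / (A + 1)))).
set t := Num.min _ _; have t0 : 0 < t by rewrite !lt_min !divr_gt0.
have [t1 td te] : [/\ t <= 1 / 2, t <= d / 2 & t <= e / (A + 1)].
  by rewrite !ge_min !lexx !orbT.
rewrite ler_pdivlMr // in te; split=> //; lra.
Qed.

Lemma grad_atE_directional (f : M -> \bar R) (x g D : M) (eps : R) :
  grad_atE f x g -> 0 < eps ->
  exists2 delta, 0 < delta & forall t, 0 < t < delta ->
    f (x + t *: D) \is a fin_num /\
    t * frob g D <= fine (f (x + t *: D)) - fine (f x) + t * eps.
Proof.
move=> [_ f_grad] eps0; set L := fnorm D.
have L1 : 0 < L + 1 by rewrite ltr_wpDl ?sqrtr_ge0.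
set e := eps / (L + 1); have e0 : 0 < e by rewrite divr_gt0.
have eL : e * (L + 1) = eps by rewrite mulfVK ?gt_eqF.
have [d d0 f_near] := f_grad e e0.
exists (d / (L + 1)) => [|t /andP[t0]]; first by rewrite divr_gt0.
rewrite ltr_pdivlMr // => td.
have tD : fnorm (t *: D) = t * L by rewrite fnormZ ?ltW.
have [|fin] := f_near (t *: D); first by rewrite tD; nra.
rewrite frobZr tD ler_norml => /andP[le _]; split=> //.
have : e * (t * L) + e * t = t * eps by rewrite -eL; ring.
have : 0 < e * t by rewrite mulr_gt0.
lra.
Qed.

Lemma strongly_convexE_grad_ineq (f : M -> \bar R) (m : R) (x y g : M) :
  0 <= m -> strongly_convexE f m -> grad_atE f x g -> f y \is a fin_num ->
  frob g (y - x) + m / 2 * sqnorm (y - x) <= fine (f y) - fine (f x).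
Proof.
move=> m0 f_sc f_grad fy; apply/ler_addgt0Pr => e e0.
have e2 : 0 < e / 2 by rewrite divr_gt0.
have [d d0 f_dir] := grad_atE_directional (y - x) f_grad e2.
have [t [t0 td t1 tmN]] :=
  exists_small_pos d0 (mulr_ge0 m0 (sqnorm_ge0 (y - x))) e0.
have [|_ le_dir] := f_dir t; first by rewrite t0 td.
have [|_] := f_sc y x t _ fy f_grad.1; first by rewrite t0 t1.
have -> : t *: y + (1 - t) *: x = x + t *: (y - x).
  by apply/matrixP => i j; rewrite !mxE; ring.
(* Dividing the segment estimates by t leaves an error m t |y - x|^2 / 2 + e / 2. *)
move=> le_cvx; rewrite -(ler_pM2l t0).
have : t * (t * (m * sqnorm (y - x))) <= t * e by rewrite ler_pM2l.
lra.
Qed.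

Lemma armijo_sufficient_decrease (f : M -> \bar R) (m c1 : R) (x y g : M) :
  0 <= m -> 0 < c1 < 1 -> strongly_convexE f m -> grad_atE f x g ->
  f y \is a fin_num -> (f y <= f x + (c1 * frob g (y - x))%:E)%E ->
  c1 * m / 2 * sqnorm (y - x) <= fine (f x) - fine (f y).
Proof.
move=> m0 c01 f_sc f_grad fy.
have := strongly_convexE_grad_ineq m0 f_sc f_grad fy.
rewrite -(fineK f_grad.1) -(fineK fy) -EFinD lee_fin.
have := mulr_ge0 m0 (sqnorm_ge0 (y - x)).
nra.
Qed.

Lemma armijo_accepted_step (f : M -> \bar R) (x d g y : M) (c1 beta : R) (k : nat) :
  first_pow (fun a : R => f (x + a *: d)%R <= f x + (c1 * a * frob g d)%:E)%E beta k ->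
  y = x + beta ^+ k *: d -> (f y <= f x + (c1 * frob g (y - x))%:E)%E.
Proof.
move=> [armijo _] ->.
have -> : x + beta ^+ k *: d - x = beta ^+ k *: d by rewrite addrC addKr.
by rewrite frobZr mulrA.
Qed.

End StrongConvexity.

Lemma min3_mul_sum_le (R : realDomainType) (a1 a2 a3 N1 N2 N3 : R) :
  0 <= N1 -> 0 <= N2 -> 0 <= N3 ->
  Num.min a1 (Num.min a2 a3) * (N1 + N2 + N3) <= a1 * N1 + a2 * N2 + a3 * N3.
Proof.
move=> N1_ge0 N2_ge0 N3_ge0; rewrite !mulrDr.
by rewrite !lerD // ler_wpM2r // !ge_min !lexx ?orbT.
Qed.

Section BlockStrongConvexity.
Variables (R : realType) (n : nat) (psi : R -> \bar R) (Xhat : 'M[R]_n).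
Hypotheses (psi_cvx : convex_fun psi) (psiNy : never_minfty psi).

Lemma strongly_convexE_block (p q : nat) (Z : 'M[R]_(p, q) -> 'M[R]_n)
    (K : 'M[R]_(p, q) -> R) (s lam : R) :
  (forall x y t, Z (t *: x + (1 - t) *: y) = t *: Z x + (1 - t) *: Z y) ->
  strongly_convex K s -> 0 <= lam ->
  strongly_convexE
    (fun w => Psi psi (Z w) - (frob (Z w) Xhat)%:E + (lam * K w)%:E)%E (lam * s).
Proof.
move=> Z_aff K_sc lam0.
apply: (@strongly_convexE_convexD _ _ _ _ (fun w => Psi psi (Z w))
          (fun w => lam * K w + - frob (Z w) Xhat)).
- by move=> w; exact: Psi_neqNy.
- by move=> x y t t01; rewrite Z_aff; exact: Psi_convex.
- apply: strongly_convexD_affine; first exact: strongly_convexZ.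
  by move=> x y t; rewrite Z_aff frobDl !frobZl; ring.
- by move=> w; rewrite EFinD EFinN addeA addeAC.
Qed.

Variables (gamma lambda : R) (R1 R2 : 'cV[R]_n -> R) (R3 : 'M[R]_n -> R).
Hypothesis lambda_ge0 : 0 <= lambda.
Let E := Elam psi gamma lambda Xhat R1 R2 R3.

Lemma Elam_strongly_convexE_u (sigma1 : R) (v : 'cV[R]_n) (C : 'M[R]_n) :
  strongly_convex R1 sigma1 -> strongly_convexE (fun u => E u v C) (lambda * sigma1).
Proof.
move=> R1_sc; apply: (strongly_convexE_block (K := fun u => R1 u + R2 v + R3 C)) => //.
- by move=> x y t; apply/matrixP => i j; rewrite !mxE; ring.
- by move=> x y t t01; have := R1_sc x y t t01; lra.
Qed.

Lemma Elam_strongly_convexE_v (sigma2 : R) (u : 'cV[R]_n) (C : 'M[R]_n) :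
  strongly_convex R2 sigma2 -> strongly_convexE (fun v => E u v C) (lambda * sigma2).
Proof.
move=> R2_sc; apply: (strongly_convexE_block (K := fun v => R1 u + R2 v + R3 C)) => //.
- by move=> x y t; apply/matrixP => i j; rewrite !mxE; ring.
- by move=> x y t t01; have := R2_sc x y t t01; lra.
Qed.

Lemma Elam_strongly_convexE_C (sigma3 : R) (u v : 'cV[R]_n) :
  strongly_convex R3 sigma3 -> strongly_convexE (fun C => E u v C) (lambda * sigma3).
Proof.
move=> R3_sc; apply: (strongly_convexE_block (K := fun C => R1 u + R2 v + R3 C)) => //.
- by move=> x y t; apply/matrixP => i j; rewrite !mxE; ring.
- by move=> x y t t01; have := R3_sc x y t t01; lra.
Qed.

End BlockStrongConvexity.

Theorem lemma1 (R : realType) (n : nat)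
  (Xhat : 'M[R]_n) (mu nu : 'cV[R]_n)
  (psi : R -> \bar R) (R1 R2 : 'cV[R]_n -> R) (R3 : 'M[R]_n -> R)
  (sigma1 sigma2 sigma3 : R)
  (Cset : 'M[R]_n -> Prop) (PC : 'M[R]_n -> 'M[R]_n)
  (gamma lambda beta c1 : R)
  (u v : nat -> 'cV[R]_n) (C : nat -> 'M[R]_n)
  (gu gv : nat -> 'cV[R]_n) (Hu Hv : nat -> 'M[R]_n) (gC : nat -> 'M[R]_n)
  (mu_ mv mC : nat -> nat) :
  (0 < n)%N ->
  (* observed transport plan with marginals mu, nu (probability vectors) *)
  (forall i j, 0 <= Xhat i j) ->
  (forall i, mu i 0 = \sum_(j < n) Xhat i j) ->
  (forall j, nu j 0 = \sum_(i < n) Xhat i j) ->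
  (forall i, 0 <= mu i 0) -> \sum_(i < n) mu i 0 = 1 ->
  (forall j, 0 <= nu j 0) -> \sum_(j < n) nu j 0 = 1 ->
  (* parameters *)
  0 < gamma -> 0 < lambda -> 0 < beta < 1 -> 0 < c1 < 1 / 2 ->
  (* (A1) *)
  legendre psi -> C2_on_int_dom psi ->
  (* (A3) *)
  continuously_differentiable R1 -> strongly_convex R1 sigma1 -> 0 < sigma1 ->
  continuously_differentiable R2 -> strongly_convex R2 sigma2 -> 0 < sigma2 ->
  continuously_differentiable R3 -> strongly_convex R3 sigma3 -> 0 < sigma3 ->
  (* (A4) *)
  (exists X, Cset X) -> closed_mset Cset -> convex_mset Cset -> is_proj Cset PC ->
  (* starting point *)
  Cset (C 0%N) ->
  (* (A2) *)
  (forall i j, in_int_dom psi (Xhat i j)) ->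
  (forall k i j, in_int_dom psi ((u k i 0 + v k j 0 - C k i j) / gamma)) ->
  let E := Elam psi gamma lambda Xhat R1 R2 R3 in
  (* u-block *)
  (forall k, grad_atE (fun x => E x (v k) (C k)) (u k) (gu k)) ->
  (forall k, hess_atE (fun x => E x (v k) (C k)) (u k) (Hu k)) ->
  (forall k, let du := - (invmx (Hu k) *m gu k) in
     first_pow (fun a : R => (E (u k + a *: du)%R (v k) (C k)
                          <= E (u k) (v k) (C k) + (c1 * a * frob (gu k) du)%:E)%E)
               beta (mu_ k) /\
     u k.+1 = u k + beta ^+ (mu_ k) *: du) ->
  (* v-block *)
  (forall k, grad_atE (fun y => E (u k.+1) y (C k)) (v k) (gv k)) ->
  (forall k, hess_atE (fun y => E (u k.+1) y (C k)) (v k) (Hv k)) ->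
  (forall k, let dv := - (invmx (Hv k) *m gv k) in
     first_pow (fun a : R => (E (u k.+1) (v k + a *: dv)%R (C k)
                          <= E (u k.+1) (v k) (C k) + (c1 * a * frob (gv k) dv)%:E)%E)
               beta (mv k) /\
     v k.+1 = v k + beta ^+ (mv k) *: dv) ->
  (* C-block: projected gradient step *)
  (forall k, grad_atE (fun X => E (u k.+1) (v k.+1) X) (C k) (gC k)) ->
  (forall k, let Ca := fun a : R => PC (C k - a *: gC k) in
     first_pow (fun a : R => (E (u k.+1) (v k.+1) (Ca a)
                          <= E (u k.+1) (v k.+1) (C k)
                             + (c1 * frob (gC k) (Ca a - C k)%R)%:E)%E)
               beta (mC k) /\
     C k.+1 = Ca (beta ^+ (mC k))) ->
  exists2 w1 : R, 0 < w1 &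
    forall k,
      ((w1 * (sqnorm (u k.+1 - u k) + sqnorm (v k.+1 - v k) + sqnorm (C k.+1 - C k)))%R%:E
       <= E (u k) (v k) (C k) - E (u k.+1) (v k.+1) (C k.+1))%E.
Proof.
move=> _ _ _ _ _ _ _ _ _ lambda0 _ c1_bounds [[psiNy _] _ psi_cvx _ _] _
  _ R1_sc sigma1_gt0 _ R2_sc sigma2_gt0 _ R3_sc sigma3_gt0 _ _ _ _ _ _ _
  E grad_u _ u_step grad_v _ v_step grad_C C_step.
have c01 : 0 < c1 < 1 by lra.
have w_gt0 sigma : 0 < sigma -> 0 < c1 * (lambda * sigma) / 2.
  by move=> sigma_gt0; rewrite divr_gt0 ?mulr_gt0 //; lra.
exists (Num.min (c1 * (lambda * sigma1) / 2)
          (Num.min (c1 * (lambda * sigma2) / 2) (c1 * (lambda * sigma3) / 2))).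
  by rewrite !lt_min !w_gt0.
move=> k.
have [u_armijo u_next] := u_step k.
have [v_armijo v_next] := v_step k.
have [[C_armijo _] C_next] := C_step k; rewrite /= -C_next in C_armijo.
have decr_u := armijo_sufficient_decrease (ltW (mulr_gt0 lambda0 sigma1_gt0)) c01
  (Elam_strongly_convexE_u psi_cvx psiNy (ltW lambda0) R1_sc) (grad_u k) (grad_v k).1
  (armijo_accepted_step (f := fun x => E x (v k) (C k)) u_armijo u_next).
have decr_v := armijo_sufficient_decrease (ltW (mulr_gt0 lambda0 sigma2_gt0)) c01
  (Elam_strongly_convexE_v psi_cvx psiNy (ltW lambda0) R2_sc) (grad_v k) (grad_C k).1
  (armijo_accepted_step (f := fun y => E (u k.+1) y (C k)) v_armijo v_next).
have decr_C := armijo_sufficient_decrease (ltW (mulr_gt0 lambda0 sigma3_gt0)) c01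
  (Elam_strongly_convexE_C psi_cvx psiNy (ltW lambda0) R3_sc) (grad_C k) (grad_u k.+1).1
  C_armijo.
rewrite -(fineK (grad_u k).1) -(fineK (grad_u k.+1).1) -EFinB lee_fin.
apply: le_trans (min3_mul_sum_le _ _ _ (sqnorm_ge0 _) (sqnorm_ge0 _) (sqnorm_ge0 _)) _.
lra.
Qed.
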